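(* Let $\mathcal{A}$ be Suslin, $\Phi\colon\mathcal{A}\to\mathbb{R}$ measurable and semibounded, $\mathcal{Q}$ separable and metrizable, and $\Psi\colon\mathcal{A}\to\mathcal{Q}$ measurable. For measurable $g_1,\dots,g_n\colon\mathcal{Q}\to\mathbb{R}$ and closed (possibly semi-infinite or degenerate) intervals $I_1,\dots,I_n$, let $\mathfrak{Q}:=\{\mathbb{Q}\in\mathcal{M}(\mathcal{Q}):\mathbb{E}_{\mathbb{Q}}[g_i]\in I_i,\ i=1,\dots,n\}$, $\Pi(I):=\{\pi\in\mathcal{M}(\mathcal{A}):\Psi\pi\in\mathfrak{Q}\}$, and $\Pi(I,n):=\Pi(I)\cap\Delta(n)$. Then $\mathcal{U}(\Pi(I))=\mathcal{U}(\Pi(I,n))$, where \[\mathcal{U}(\Pi(I,n))=\sup\Big\{\sum_{i=0}^n\alpha_i\Phi(\mu_i)\ :\ \mu_i\in\mathcal{A},\ \alpha_i\ge0,\ \sum_{i=0}^n\alpha_i=1,\ \sum_{i=0}^n\alpha_ig_j(\Psi(\mu_i))\in I_j\text{ for }j=1,\dots,n\Big\}.\]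
   Context: $\mathcal{M}(\mathcal{Y})$: Borel probability measures; $\Psi\pi$ is the pushforward of $\pi$. Implicit in the definition of $\mathfrak{Q}$ is that all $n$ integrals exist. $\Delta(n):=\{\sum_{i=0}^n\alpha_i\delta_{\mu_i}:\mu_i\in\mathcal{A},\alpha_i\ge0\}$. For $\Pi\subseteq\mathcal{M}(\mathcal{A})$, $\mathcal{U}(\Pi):=\sup_{\pi\in\Pi}\mathbb{E}_\pi[\Phi]$, with $\sup\varnothing=-\infty$. *)

From HB Require Import structures.
From mathcomp Require Import all_boot all_order all_algebra.
From mathcomp Require Import all_classical all_reals all_analysis.

Set Implicit Arguments.
Unset Strict Implicit.
Unset Printing Implicit Defensive.

Import Order.TTheory GRing.Theory Num.Theory.
Local Open Scope classical_set_scope.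
Local Open Scope ring_scope.

Definition is_metric (R : realType) (T : Type) (d : T -> T -> R) : Prop :=
  [/\ forall x y, d x y = 0 <-> x = y,
      forall x y, d x y = d y x &
      forall x y z, d x z <= d x y + d y z].

Definition metric_induces (R : realType) (T : topologicalType) (d : T -> T -> R)
  : Prop :=
  forall U : set T, open U <->
    (forall x, U x -> exists2 e : R, 0 < e & [set y | d x y < e] `<=` U).

Definition metric_complete (R : realType) (T : Type) (d : T -> T -> R) : Prop :=
  forall u : nat -> T,
    (forall e : R, 0 < e -> exists N, forall m n, (N <= m)%N -> (N <= n)%N ->
        d (u m) (u n) < e) ->
    exists l, forall e : R, 0 < e -> exists N, forall n, (N <= n)%N -> d (u n) l < e.

Definition separable_space (T : topologicalType) : Prop :=
  exists D : set T, countable D /\ closure D = setT.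

Definition metrizable_space (R : realType) (T : topologicalType) : Prop :=
  exists d : T -> T -> R, is_metric d /\ metric_induces d.

Definition polish_space (R : realType) (T : topologicalType) : Prop :=
  separable_space T /\
  exists d : T -> T -> R, [/\ is_metric d, metric_induces d & metric_complete d].

Definition suslin_space (R : realType) (T : topologicalType) : Prop :=
  hausdorff_space T /\
  exists (P : topologicalType) (f : P -> T),
    [/\ polish_space R P, continuous f & forall y : T, exists x : P, f x = y].

Definition borel (T : ptopologicalType) := g_sigma_algebraType (@open T).

Local Open Scope ereal_scope.

Definition in_cinterval (R : realType) (lo up : \bar R) (x : R) : Prop :=
  lo <= x%:E <= up.

Definition frakQ (R : realType) (Q : ptopologicalType) (n : nat)
  (g : 'I_n -> Q -> R) (lo up : 'I_n -> \bar R)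
  : set (probability (borel Q) R) :=
  [set P | forall j : 'I_n,
     P.-integrable [set: borel Q] (fun y => (g j y)%:E) /\
     lo j <= \int[P]_y (g j y)%:E <= up j].

Definition PiI (R : realType) (A Q : ptopologicalType) (Psi : A -> Q) (n : nat)
  (g : 'I_n -> Q -> R) (lo up : 'I_n -> \bar R)
  : set (probability (borel A) R) :=
  [set pi | exists2 P : probability (borel Q) R,
     (forall B : set (borel Q), measurable B ->
        P B = pushforward pi (Psi : borel A -> borel Q) B)
     & frakQ g lo up P].

Definition Delta (R : realType) (A : ptopologicalType) (n : nat)
  : set (probability (borel A) R) :=
  [set pi | exists (mu : 'I_n.+1 -> A) (alpha : 'I_n.+1 -> R),
     (forall i, (0 <= alpha i)%R) /\
     forall B : set (borel A), measurable B ->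
       pi B = \sum_(i < n.+1) (alpha i)%:E * \d_(mu i : borel A) B].

(* U(Pi) = sup_{pi in Pi} E_pi[Phi]  (sup of the empty set is -oo) *)
Definition Uval (R : realType) (A : ptopologicalType) (Phi : A -> R)
  (Pi : set (probability (borel A) R)) : \bar R :=
  ereal_sup [set \int[pi]_x (Phi x)%:E | pi in Pi].

Definition semibounded (R : realType) (T : Type) (f : T -> R) : Prop :=
  (exists M : R, forall x, (f x <= M)%R) \/ (exists M : R, forall x, (M <= f x)%R).

From HB Require Import structures.
From mathcomp Require Import all_boot all_order all_algebra.
From mathcomp Require Import all_classical all_reals all_analysis.
From mathcomp Require Import ring lra measurable_realfun.

(* Restricting to the mixtures of [n + 1] Dirac masses can only lower the
   supremum, and such mixtures lie in Pi(I, n) exactly when their images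
   satisfy the moment constraints; this gives the second equation.
   Conversely, fix pi in Pi(I) and c < E_pi[Phi], and centre the moment
   functions g_j o Psi at their pi-means m_j.  Separating 0 from the cone
   generated by the points (g(Psi x) - m, Phi x - c - r), r >= 0, yields a
   finite convex combination with the same moments and value at least c,
   unless some nontrivial linear combination of the centred moments vanishes
   pi-almost surely, in which case one constraint can be dropped (induction
   on n).  Caratheodory's theorem then cuts the combination down to n + 1
   points. *)

Set Implicit Arguments.
Unset Strict Implicit.
Unset Printing Implicit Defensive.
Import Order.TTheory GRing.Theory Num.Theory.
Local Open Scope classical_set_scope.
Local Open Scope ring_scope.

Section cone_separation.
Variable R : realType.

Definition dotv d (a y : 'I_d -> R) : R := \sum_(i < d) a i * y i.

Definition rconsv d (y : 'I_d -> R) (s : R) : 'I_d.+1 -> R :=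
  fun i => if unlift ord_max i is Some j then y j else s.

Definition droplastv d (y : 'I_d.+1 -> R) : 'I_d -> R :=
  fun j => y (lift ord_max j).

Definition conic d (K : set ('I_d -> R)) :=
  (forall y z, K y -> K z -> K (fun i => y i + z i)) /\
  (forall t y, 0 < t -> K y -> K (fun i => t * y i)).

Lemma rconsv_max d (y : 'I_d -> R) s : rconsv y s ord_max = s.
Proof. by rewrite /rconsv unlift_none. Qed.

Lemma rconsv_lift d (y : 'I_d -> R) s j : rconsv y s (lift ord_max j) = y j.
Proof. by rewrite /rconsv liftK. Qed.

Lemma droplastv_rconsv d (y : 'I_d -> R) s : droplastv (rconsv y s) = y.
Proof. by apply/funext => j; rewrite /droplastv rconsv_lift. Qed.

Lemma rconsv_droplastv d (y : 'I_d.+1 -> R) : rconsv (droplastv y) (y ord_max) = y.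
Proof. by apply/funext => i; rewrite /rconsv /droplastv; case: unliftP => [j ->|->]. Qed.

Lemma dotv_rconsv d (a y : 'I_d -> R) t s :
  dotv (rconsv a t) (rconsv y s) = dotv a y + t * s.
Proof.
rewrite /dotv big_ord_recr /= !rconsv_max; congr (_ + _).
apply: eq_bigr => i _.
have -> : widen_ord (leqnSn d) i = lift ord_max i.
  by apply/val_inj; exact: (esym (lift_max i)).
by rewrite !rconsv_lift.
Qed.

Lemma dotv_droplastv d (a y : 'I_d.+1 -> R) :
  dotv a y = dotv (droplastv a) (droplastv y) + a ord_max * y ord_max.
Proof. by rewrite -{1}(rconsv_droplastv a) -{1}(rconsv_droplastv y) dotv_rconsv. Qed.

Lemma dotv0l d (y : 'I_d -> R) : dotv (fun=> 0) y = 0.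
Proof. by rewrite /dotv big1 // => i _; rewrite mul0r. Qed.

Lemma dotv_droplastv_comb d (a : 'I_d -> R) (y z : 'I_d.+1 -> R) s t :
  dotv a (droplastv (fun i => s * y i + t * z i)) =
  s * dotv a (droplastv y) + t * dotv a (droplastv z).
Proof.
rewrite /dotv /droplastv !mulr_sumr -big_split /=.
by apply: eq_bigr => i _; ring.
Qed.

Section conic.
Variables (d : nat) (K : set ('I_d.+1 -> R)).
Hypothesis coneK : conic K.

Lemma conic_mix_last0 y z : K y -> K z -> 0 < y ord_max -> z ord_max < 0 ->
  K (fun i => - z ord_max * y i + y ord_max * z i) /\
  - z ord_max * y ord_max + y ord_max * z ord_max = 0.
Proof.
move=> Ky Kz y0 z0; split; last by ring.
by case: coneK => Kadd Kscal; apply: Kadd; apply: Kscal; rewrite ?oppr_gt0.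
Qed.

Lemma conic_section :
  ~ K (fun=> 0) -> conic [set y | K (rconsv y 0)] /\ ~ K (rconsv (fun=> 0) 0).
Proof.
have rconsv0 : rconsv (fun=> 0) 0 = (fun=> 0) :> ('I_d.+1 -> R).
  by apply/funext => i; rewrite /rconsv; case: unlift.
move=> K0; rewrite rconsv0; split => //; case: coneK => Kadd Kscal; split.
- move=> y z Ky Kz /=; have := Kadd _ _ Ky Kz; congr K.
  by apply/funext => i; rewrite /rconsv; case: unlift; rewrite ?addr0.
- move=> t y t0 Ky /=; have := Kscal _ _ t0 Ky; congr K.
  by apply/funext => i; rewrite /rconsv; case: unlift; rewrite ?mulr0.
Qed.

Variable a : 'I_d -> R.
Let p (y : 'I_d.+1 -> R) := dotv a (droplastv y).
Hypothesis a_ge0 : forall y, K y -> y ord_max = 0 -> 0 <= p y.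

Lemma conic_lift_bound y z : K y -> K z -> 0 < y ord_max -> z ord_max < 0 ->
  - p y / y ord_max <= p z / - z ord_max.
Proof.
move=> Ky Kz y0 z0; have [Kw w0] := conic_mix_last0 Ky Kz y0 z0.
have := a_ge0 Kw w0; rewrite /p dotv_droplastv_comb -/(p y) -/(p z) => pw.
have zp : 0 < - z ord_max by rewrite oppr_gt0.
rewrite ler_pdivrMr // mulrAC ler_pdivlMr //; nra.
Qed.

(* The admissible slopes [t] form an interval: the supremum of the lower
   bounds coming from points above the hyperplane works. *)
Lemma conic_lift : (exists2 y, K y & 0 < y ord_max) ->
  (exists2 z, K z & z ord_max < 0) ->
  exists t, forall y, K y -> 0 <= p y + t * y ord_max.
Proof.
move=> [yp Kyp yp0] [zn Kzn zn0].
pose S := [set - p y / y ord_max | y in [set y | K y /\ 0 < y ord_max]].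
have S0 : S !=set0 by exists (- p yp / yp ord_max), yp.
have Sub z : K z -> z ord_max < 0 -> ubound S (p z / - z ord_max).
  by move=> Kz z0 _ [y [Ky y0] <-]; exact: conic_lift_bound.
have supS : has_sup S by split => //; exists (p zn / - zn ord_max); exact: Sub.
exists (sup S) => y Ky; have [y0|y0|y0] := ltgtP (y ord_max) 0.
- have := ge_sup S0 (Sub _ Ky y0).
  have yp' : 0 < - y ord_max by rewrite oppr_gt0.
  by rewrite ler_pdivlMr //; nra.
- have : - p y / y ord_max <= sup S by apply: sup_upper_bound => //; exists y.
  by rewrite ler_pdivrMr //; nra.
- by rewrite y0 mulr0 addr0; exact: a_ge0.
Qed.

End conic.

Lemma cone_separation d (K : set ('I_d -> R)) : conic K -> ~ K (fun=> 0) ->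
  K !=set0 -> exists2 a : 'I_d -> R, (exists i, a i != 0) &
    forall y, K y -> 0 <= dotv a y.
Proof.
elim: d K => [|d IH] K coneK K0 [y Ky].
  by exfalso; apply: K0; have <- : y = (fun=> 0) by apply/funext => -[].
have last_sign s : s != 0 -> (forall y, K y -> 0 <= s * y ord_max) ->
    exists2 a : 'I_d.+1 -> R, (exists i, a i != 0) & forall y, K y -> 0 <= dotv a y.
  move=> s0 Ks; exists (rconsv (fun=> 0) s); first by exists ord_max; rewrite rconsv_max.
  move=> z Kz; rewrite dotv_droplastv droplastv_rconsv dotv0l add0r rconsv_max.
  exact: Ks.
have [Kneg|] := pselect (exists2 z, K z & z ord_max < 0); last first.
  move=> Kpos; apply: (last_sign 1) => [|z Kz]; first exact: oner_neq0.
  by rewrite mul1r leNgt; apply/negP => z0; apply: Kpos; exists z.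
have [Kpos|] := pselect (exists2 z, K z & 0 < z ord_max); last first.
  move=> Kneg'; apply: (last_sign (-1)) => [|z Kz]; first by rewrite oppr_eq0 oner_neq0.
  by rewrite mulN1r oppr_ge0 leNgt; apply/negP => z0; apply: Kneg'; exists z.
have [coneK1 K10] := conic_section coneK K0.
have K1ne : [set y | K (rconsv y 0)] !=set0.
  case: Kpos Kneg => [yp Kyp yp0] [zn Kzn zn0].
  have [Kw w0] := conic_mix_last0 coneK Kyp Kzn yp0 zn0.
  exists (droplastv (fun i => - zn ord_max * yp i + yp ord_max * zn i)).
  by rewrite /= -w0 rconsv_droplastv.
have [a [i ai] aK1] := IH _ coneK1 K10 K1ne.
have a_ge0 z : K z -> z ord_max = 0 -> 0 <= dotv a (droplastv z).
  by move=> Kz z0; apply: aK1; rewrite /= -z0 rconsv_droplastv.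
have [t Kt] := conic_lift coneK a_ge0 Kpos Kneg.
exists (rconsv a t); first by exists (lift ord_max i); rewrite rconsv_lift.
by move=> z Kz; rewrite dotv_droplastv droplastv_rconsv rconsv_max; exact: Kt.
Qed.

End cone_separation.

Section finite_combination.
Context (R : realType) (X : Type).
Implicit Types (s : seq (R * X)) (D : set X).

(* A finite combination is a list of (weight, point) pairs. *)
Definition wsum s (f : X -> R) : R := \sum_(p <- s) p.1 * f p.2.

Fixpoint weighted_in D s : Prop :=
  if s is p :: s' then [/\ 0 <= p.1, D p.2 & weighted_in D s'] else True.

Definition convex_comb D s := weighted_in D s /\ wsum s (fun=> 1) = 1.

Definition wscale t s := [seq (t * p.1, p.2) | p <- s].

Lemma weighted_in_cat D s1 s2 :
  weighted_in D s1 -> weighted_in D s2 -> weighted_in D (s1 ++ s2).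
Proof. by elim: s1 => //= p s IH [? ? ?] ?; split => //; exact: IH. Qed.

Lemma weighted_in_wscale D t s : 0 <= t -> weighted_in D s -> weighted_in D (wscale t s).
Proof.
by move=> t0; elim: s => //= p s IH [p0 Dp ws]; split => //; [exact: mulr_ge0|exact: IH].
Qed.

Lemma weighted_in_sub D D' s : D `<=` D' -> weighted_in D s -> weighted_in D' s.
Proof.
by move=> DD'; elim: s => //= p s IH [? ? ?]; split => //; [exact: DD'|exact: IH].
Qed.

Lemma weighted_in_map D (T : Type) (r : seq T) (f : T -> R * X) :
  (forall p, 0 <= (f p).1 /\ D (f p).2) -> weighted_in D (map f r).
Proof. by move=> H; elim: r => //= p r IH; have [? ?] := H p. Qed.

Lemma weighted_in_nth D s p0 i : weighted_in D s -> (i < size s)%N ->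
  0 <= (nth p0 s i).1 /\ D (nth p0 s i).2.
Proof. by elim: s i => [|p s IH] //= [|i] [p0' Dp ws] //= si; apply: IH. Qed.

Lemma wsum_cat s1 s2 f : wsum (s1 ++ s2) f = wsum s1 f + wsum s2 f.
Proof. exact: big_cat. Qed.

Lemma wsum_wscale t s f : wsum (wscale t s) f = t * wsum s f.
Proof. by rewrite /wsum big_map mulr_sumr; apply: eq_bigr => p _ /=; rewrite mulrA. Qed.

Lemma wsum1 a x f : wsum [:: (a, x)] f = a * f x.
Proof. by rewrite /wsum big_cons big_nil addr0. Qed.

Lemma eq_wsum_in D s f g : weighted_in D s -> (forall x, D x -> f x = g x) ->
  wsum s f = wsum s g.
Proof.
move=> ws fg; elim: s ws => [|p s IH] /=; first by rewrite /wsum !big_nil.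
by case=> _ Dp ws; rewrite /wsum !big_cons fg // -!/(wsum _ _) IH.
Qed.

Lemma wsumD s f g : wsum s (fun x => f x + g x) = wsum s f + wsum s g.
Proof. by rewrite /wsum -big_split; apply: eq_bigr => p _; rewrite mulrDr. Qed.

Lemma wsumZ s c f : wsum s (fun x => c * f x) = c * wsum s f.
Proof. by rewrite /wsum mulr_sumr; apply: eq_bigr => p _; rewrite mulrCA. Qed.

Lemma wsum0 s : wsum s (fun=> 0) = 0.
Proof. by rewrite /wsum big1 // => p _; rewrite mulr0. Qed.

Lemma wsum_lin k s (a : 'I_k -> R) (f : 'I_k -> X -> R) :
  wsum s (fun x => \sum_i a i * f i x) = \sum_i a i * wsum s (f i).
Proof.
rewrite /wsum; under eq_bigr do rewrite mulr_sumr.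
rewrite exchange_big /=; apply: eq_bigr => i _; rewrite mulr_sumr.
by apply: eq_bigr => p _; rewrite mulrCA.
Qed.

End finite_combination.

Section moment_cone.
Context (R : realType) (X : Type) (k : nat) (D : set X).
Variables (u : 'I_k -> X -> R) (h : X -> R) (c : R).

Definition moment_comb s :=
  [/\ convex_comb D s, forall j, wsum s (u j) = 0 & c <= wsum s h].

(* The cone generated by the points (u x, h x - c - r), x in D, r >= 0. *)
Definition moment_cone : set ('I_k.+1 -> R) :=
  [set y | exists s t r, [/\ convex_comb D s, 0 < t, 0 <= r &
    y = rconsv (fun j => t * wsum s (u j)) (t * (wsum s h - c - r))]].

Lemma moment_cone_conic : conic moment_cone.
Proof.
split=> [_ _ [s1 [t1 [r1 [[w1 s1_1] t1_0 r1_0 ->]]]]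
          [s2 [t2 [r2 [[w2 s2_1] t2_0 r2_0 ->]]]]|].
  have t0 : 0 < t1 + t2 by rewrite addr_gt0.
  have t_neq0 : t1 + t2 != 0 by rewrite gt_eqF.
  exists (wscale (t1 / (t1 + t2)) s1 ++ wscale (t2 / (t1 + t2)) s2), (t1 + t2),
    ((t1 * r1 + t2 * r2) / (t1 + t2)); split => //.
  - split; first by apply: weighted_in_cat; apply: weighted_in_wscale => //;
      apply: divr_ge0; apply: ltW.
    by rewrite wsum_cat !wsum_wscale s1_1 s2_1 !mulr1 -mulrDl divff.
  - by apply: divr_ge0; [apply: addr_ge0; apply: mulr_ge0 => //; apply: ltW|apply: ltW].
  - by apply/funext => i; rewrite /rconsv; case: unlift => [j|];
      rewrite !wsum_cat !wsum_wscale; field.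
move=> t _ t0 [s [t' [r [cs t'0 r0 ->]]]]; exists s, (t * t'), r.
split => //; first exact: mulr_gt0.
by apply/funext => i; rewrite /rconsv; case: unlift => [j|]; rewrite mulrA.
Qed.

Lemma moment_cone0 : moment_cone (fun=> 0) -> exists s, moment_comb s.
Proof.
move=> [s [t [r [cs t0 r0 e]]]]; exists s; split => //.
  move=> j; have /esym/eqP := congr1 (fun y => y (lift ord_max j)) e.
  by rewrite rconsv_lift mulf_eq0 gt_eqF //= => /eqP.
have /esym/eqP := congr1 (fun y => y ord_max) e.
rewrite rconsv_max mulf_eq0 gt_eqF //= subr_eq0 => /eqP hsc.
by rewrite -subr_ge0 hsc.
Qed.

Lemma moment_cone_point x r : D x -> 0 <= r ->
  moment_cone (rconsv (fun j => u j x) (h x - c - r)).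
Proof.
move=> Dx r0; exists [:: (1, x)], 1, r; split => //.
  by split; [rewrite /= ler01|rewrite wsum1 mulr1].
by rewrite !wsum1 !mul1r; congr rconsv; apply/funext => j; rewrite wsum1 !mul1r.
Qed.

(* If no combination matches the moments, a hyperplane separates the
   cone from 0; its last coefficient [b] is nonpositive since [r] is free. *)
Lemma moment_cone_separation : D !=set0 -> ~ (exists s, moment_comb s) ->
  exists a : 'I_k -> R, exists b : R,
    [/\ b != 0 \/ (exists j, a j != 0), b <= 0 &
        forall x, D x -> 0 <= \sum_j a j * u j x + b * (h x - c)].
Proof.
move=> [x0 Dx0] nocomb.
have [||e [i ei] eK] := cone_separation moment_cone_conic.
- by move=> /moment_cone0.
- by exists (rconsv (fun j => u j x0) (h x0 - c - 0)); exact: moment_cone_point.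
have ineq x r : D x -> 0 <= r ->
    0 <= \sum_j droplastv e j * u j x + e ord_max * (h x - c - r).
  move=> Dx r0; have := eK _ (moment_cone_point Dx r0).
  by rewrite dotv_droplastv droplastv_rconsv rconsv_max.
exists (droplastv e), (e ord_max); split.
- move: ei; case: (unliftP ord_max i) => [j ->|->]; last by left.
  by right; exists j.
- rewrite leNgt; apply/negP => b0.
  pose E := \sum_j droplastv e j * u j x0 + e ord_max * (h x0 - c).
  have r0 : 0 <= `|E| / e ord_max + 1 by rewrite addr_ge0 // divr_ge0 // ltW.
  have := ineq _ _ Dx0 r0.
  have -> : \sum_j droplastv e j * u j x0 +
      e ord_max * (h x0 - c - (`|E| / e ord_max + 1)) = E - `|E| - e ord_max.
    by rewrite /E; field; rewrite gt_eqF.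
  have := ler_norm E; lra.
- by move=> x Dx; have := ineq _ _ Dx (lexx 0); rewrite subr0.
Qed.

End moment_cone.

Section integral_complements.
Context d (X : measurableType d) (R : realType) (mu : {measure set X -> \bar R}).
Local Open Scope ereal_scope.

Lemma measurable_le_integral (D : set X) (f g : X -> \bar R) : measurable D ->
  measurable_fun D f -> measurable_fun D g -> (forall x, D x -> f x <= g x) ->
  \int[mu]_(x in D) f x <= \int[mu]_(x in D) g x.
Proof.
move=> mD mf mg fg; rewrite integralE [leRHS]integralE leeB //.
- apply: ge0_le_integral (measurable_funepos mf) (measurable_funepos mg) _ => // x Dx.
  by apply: (funepos_le (D := D)) => [y /set_mem|]; [exact: fg|exact: mem_set].
- apply: ge0_le_integral (measurable_funeneg mg) (measurable_funeneg mf) _ => // x Dx.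
  by apply: (funeneg_le (D := D)) => [y /set_mem|]; [exact: fg|exact: mem_set].
Qed.

Lemma integral_setD_null (D N : set X) (f : X -> \bar R) : measurable N ->
  measurable D -> measurable_fun D f -> mu N = 0 ->
  \int[mu]_(x in D) f x = \int[mu]_(x in D `\` N) f x.
Proof.
move=> mN mD mf N0; rewrite integralE [RHS]integralE.
rewrite (ge0_negligible_integral mN mD (measurable_funepos mf)) //.
by rewrite (ge0_negligible_integral mN mD (measurable_funeneg mf)).
Qed.

Lemma integral_sum_moments k (D : set X) (u : 'I_k -> X -> R) (a : 'I_k -> R) :
  measurable D -> (forall j, mu.-integrable D (EFin \o u j)) ->
  (forall j, \int[mu]_(x in D) (u j x)%:E = 0) ->
  mu.-integrable D (fun x => (\sum_j a j * u j x)%:E) /\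
  \int[mu]_(x in D) (\sum_j a j * u j x)%:E = 0.
Proof.
move=> mD iu u0.
have iau j : mu.-integrable D (fun x => (a j * u j x)%:E).
  by under eq_fun do rewrite EFinM; exact: (integrableZl mD _ (iu _)).
under eq_fun do rewrite -sumEFin; split; first exact: integrable_sum.
rewrite integral_sum // big1 // => j _.
under eq_integral do rewrite EFinM.
by rewrite integralZl //; [rewrite u0 mule0|exact: iu].
Qed.

End integral_complements.

Section moment_combination.
Context d (X : measurableType d) (R : realType) (mu : probability X R).
Local Open Scope ereal_scope.

Lemma integral_le_moment_bound k (D : set X) (u : 'I_k -> X -> R) (a : 'I_k -> R)
    (h : X -> R) (c : R) :
  measurable D -> mu D = 1 -> (forall j, mu.-integrable D (EFin \o u j)) ->
  (forall j, \int[mu]_(x in D) (u j x)%:E = 0) -> measurable_fun D h ->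
  (forall x, D x -> h x <= c + \sum_j a j * u j x)%R ->
  \int[mu]_(x in D) (h x)%:E <= c%:E.
Proof.
move=> mD muD iu u0 mh hle.
have [iau au0] := integral_sum_moments a mD iu u0.
have ic : mu.-integrable D (EFin \o cst c) by exact: finite_measure_integrable_cst.
have icau := integrableD mD ic iau.
have mcau : measurable_fun D (fun x => (c + \sum_j a j * u j x)%:E).
  by under eq_fun do rewrite EFinD; exact: measurable_int icau.
apply: (@le_trans _ _ (\int[mu]_(x in D) (c + \sum_j a j * u j x)%:E)).
  have mEh : measurable_fun D (EFin \o h) by exact/measurable_EFinP.
  by apply: measurable_le_integral mD mEh mcau _ => x Dx; rewrite lee_fin; exact: hle.
under eq_integral do rewrite EFinD.
rewrite (integralD mD ic iau) au0 adde0 /= integral_cst //.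
by rewrite (_ : c%:E * mu D = c%:E) // -[RHS]mule1; congr (_ * _); exact: muD.
Qed.

Lemma moment_comb_or_relation k (D : set X) (u : 'I_k -> X -> R) (h : X -> R)
    (c : R) :
  measurable D -> mu D = 1 -> (forall j, mu.-integrable D (EFin \o u j)) ->
  (forall j, \int[mu]_(x in D) (u j x)%:E = 0) -> measurable_fun D h ->
  c%:E < \int[mu]_(x in D) (h x)%:E ->
  (exists s, moment_comb D u h c s) \/
  exists2 a : 'I_k -> R, exists j, (a j != 0)%R &
    {ae mu, forall x, D x -> \sum_j a j * u j x = 0}%R.
Proof.
move=> mD muD iu u0 mh ch.
have [x0 Dx0] : D !=set0.
  apply/set0P/negP => /eqP D0; move: muD; rewrite D0 measure0 => /eqP.
  by rewrite eq_sym onee_eq0.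
have [|nocomb] := pselect (exists s, moment_comb D u h c s); first by left.
right; have [a [b [ab0 b_le0 abK]]] := moment_cone_separation (ex_intro _ x0 Dx0) nocomb.
have [b_lt0|b_ge0] := ltP b 0%R.
  exfalso; move: ch; apply/negP; rewrite -leNgt.
  apply: (integral_le_moment_bound (a := fun j => a j / - b)%R) => // x Dx.
  have -> : (\sum_j a j / - b * u j x = (\sum_j a j * u j x) / - b)%R.
    by rewrite mulr_suml; apply: eq_bigr => j _; rewrite mulrAC.
  have := abK x Dx => abx; rewrite -lerBlDl ler_pdivlMr ?oppr_gt0 //; nra.
have {b_le0 b_ge0} b0 : b = 0%R by apply/le_anti/andP.
have [|[j aj]] := ab0; first by rewrite b0 eqxx.
exists a; first by exists j.
have [iau au0] := integral_sum_moments a mD iu u0.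
have au_ge0 x : D x -> (0 <= \sum_j a j * u j x)%R.
  by move=> Dx; have := abK x Dx; rewrite b0 mul0r addr0.
have /(ae_eq_integral_abs mu mD (measurable_int _ iau)) :
    \int[mu]_(x in D) `|(\sum_j a j * u j x)%:E| = 0.
  rewrite -au0; apply: eq_integral => x /set_mem Dx.
  by rewrite abse_EFin ger0_norm // au_ge0.
by apply: filterS => x au0x /au0x [].
Qed.

(* Induction on the number of moment constraints: a degenerate constraint
   holds almost surely as a linear combination of the others and can be
   dropped after removing a null set. *)
Lemma moment_comb_exists k (D : set X) (u : 'I_k -> X -> R) (h : X -> R) (c : R) :
  measurable D -> mu D = 1 -> (forall j, mu.-integrable D (EFin \o u j)) ->
  (forall j, \int[mu]_(x in D) (u j x)%:E = 0) -> measurable_fun D h ->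
  c%:E < \int[mu]_(x in D) (h x)%:E -> exists s, moment_comb D u h c s.
Proof.
elim: k D u => [|k IH] D u mD muD iu u0 mh ch.
  by have [//|[a [[]]]] := moment_comb_or_relation mD muD iu u0 mh ch.
have [//|[a [i ai] /= [M [mM M0 HM]]]] := moment_comb_or_relation mD muD iu u0 mh ch.
have sDM : D `\` M `<=` D by exact: subDsetl.
have mDM : measurable (D `\` M) by exact: measurableD.
have muDM : mu (D `\` M) = 1.
  have DM0 : mu (D `&` M) = 0.
    by apply: (subset_measure0 (measurableI _ _ mD mM) mM _ M0); exact: subIsetr.
  rewrite measureD //; last exact: le_lt_trans (probability_le1 _ mD) (ltry _).
  by rewrite -[RHS]sube0; congr (_ - _); [exact: muD|exact: DM0].
have [||||s [[ws s1] us hs]] := IH (D `\` M) (fun l => u (lift i l)) mDM muDM.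
- by move=> l; exact: integrableS mD mDM sDM (iu _).
- by move=> l; rewrite -(negligible_integral mM mD (iu _) M0); exact: u0.
- exact: measurable_funS mD sDM mh.
- by rewrite -(integral_setD_null mM mD) //; exact/measurable_EFinP.
exists s; split => //; first by split => //; exact: weighted_in_sub ws.
have usi : wsum s (u i) = 0%R.
  have : wsum s (fun x => \sum_l a l * u l x)%R = 0%R.
    rewrite (eq_wsum_in (g := fun=> 0%R) ws) ?wsum0 // => x [Dx Mx].
    by apply: contrapT => Sx; apply: Mx; apply: HM => /(_ Dx).
  rewrite wsum_lin (bigD1_ord i) //= big1 ?addr0 => [|l _]; last by rewrite us mulr0.
  by move/eqP; rewrite mulf_eq0 (negbTE ai) => /eqP.
by move=> j; case: (unliftP i j) => [l ->|->].
Qed.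

End moment_combination.

Section caratheodory.
Context (R : realType) (X : Type).
Implicit Types (s : seq (R * X)) (D : set X).

Lemma left_kernel_neq0 m n (M : 'M[R]_(m, n)) : (n < m)%N ->
  exists2 b : 'rV[R]_m, b != 0 & b *m M = 0.
Proof.
move=> nm; have rK : (0 < \rank (kermx M))%N.
  by rewrite mxrank_ker subn_gt0; exact: leq_ltn_trans (rank_leq_col M) nm.
have [i Ki] : exists i, row i (kermx M) != 0.
  apply/not_existsP => K0; move: rK; rewrite lt0n mxrank_eq0 => /eqP; apply.
  by apply/row_matrixP => i; rewrite row0; apply/eqP/negPn/negP; exact: K0.
by exists (row i (kermx M)) => //; apply/eqP; rewrite -sub_kermx row_sub.
Qed.

Lemma moment_dependence k N (u : 'I_k -> X -> R) (h : X -> R) (x : 'I_N -> X) :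
  (k.+1 < N)%N -> exists g : 'I_N -> R,
    [/\ \sum_p g p = 0, forall j, \sum_p g p * u j (x p) = 0,
        0 <= \sum_p g p * h (x p) & exists p, g p < 0].
Proof.
move=> kN; pose M : 'M[R]_(N, k.+1) := \matrix_(p, c) rconsv (fun j => u j (x p)) 1 c.
have [b b0 bM] := left_kernel_neq0 M kN.
have bc c : \sum_p b 0 p * rconsv (fun j => u j (x p)) 1 c = 0.
  have := congr1 (fun A : 'M[R]_(1, k.+1) => A 0 c) bM; rewrite !mxE /=.
  by under eq_bigr do rewrite mxE.
have b1 : \sum_p b 0 p = 0.
  by have := bc ord_max; under eq_bigr do rewrite rconsv_max mulr1.
have bu j : \sum_p b 0 p * u j (x p) = 0.
  by have := bc (lift ord_max j); under eq_bigr do rewrite rconsv_lift.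
pose sg : R := if 0 <= \sum_p b 0 p * h (x p) then 1 else -1.
have sg_neq0 : sg != 0 by rewrite /sg; case: ifP; rewrite ?oppr_eq0 oner_eq0.
pose g p := sg * b 0 p.
have g1 : \sum_p g p = 0 by rewrite -mulr_sumr b1 mulr0.
exists g; split => //.
- by move=> j; under eq_bigr do rewrite -mulrA; rewrite -mulr_sumr bu mulr0.
- under eq_bigr do rewrite -mulrA; rewrite -mulr_sumr /sg.
  case: ifPn => [|/negP]; rewrite ?mul1r // mulN1r oppr_ge0 => /negP.
  by rewrite -ltNge => /ltW.
- apply/not_existsP => g_ge0.
  have g0 p : 0 <= g p by rewrite leNgt; apply/negP; exact: g_ge0.
  move/negP: b0; apply; apply/eqP/rowP => p; rewrite mxE.
  have /eqP := psumr_eq0P (fun p _ => g0 p) g1 (i := p) isT.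
  by rewrite mulf_eq0 (negbTE sg_neq0) => /eqP.
Qed.

(* Moving along the dependence [g] until the first weight vanishes. *)
Lemma shift_weights_to_zero N (al g : 'I_N -> R) :
  (forall p, 0 <= al p) -> (exists p, g p < 0) ->
  exists t pm, [/\ 0 <= t, al pm + t * g pm = 0 & forall p, 0 <= al p + t * g p].
Proof.
move=> al0 [p0 gp0].
have [pm gpm pmin] := @arg_minP _ _ _ p0 (fun p => g p < 0) (fun p => al p / - g p) gp0.
exists (al pm / - g pm), pm; split.
- by rewrite divr_ge0 // oppr_ge0 ltW.
- by field; rewrite lt_eqF.
- move=> p; have [gp|gp] := leP 0 (g p).
    by apply: addr_ge0 => //; apply: mulr_ge0 => //; rewrite divr_ge0 // oppr_ge0 ltW.
  have := pmin p gp; rewrite ler_pdivlMr ?oppr_gt0 //; nra.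
Qed.

Lemma weighted_in_tnth D s : weighted_in D s ->
  forall i, 0 <= (tnth (in_tuple s) i).1 /\ D (tnth (in_tuple s) i).2.
Proof.
move=> ws i; rewrite (tnth_nth (tnth (in_tuple s) i)); exact: weighted_in_nth.
Qed.

Lemma caratheodory_step k (u : 'I_k -> X -> R) (h : X -> R) D s :
  convex_comb D s -> (k.+1 < size s)%N ->
  exists s', [/\ convex_comb D s', size s' = (size s).-1,
    forall j, wsum s' (u j) = wsum s (u j) & wsum s h <= wsum s' h].
Proof.
move=> [ws s1] ks; set N := size s in ks *.
pose al (p : 'I_N) := (tnth (in_tuple s) p).1.
pose x (p : 'I_N) := (tnth (in_tuple s) p).2.
have [g [g1 gu gh gneg]] := moment_dependence u h x ks.
have [|t [pm [t0 alpm al'0]]] := @shift_weights_to_zero _ al g _ gneg.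
  by move=> p; have [] := weighted_in_tnth ws p.
pose s' := [seq (al p + t * g p, x p) | p <- enum (predC1 pm)].
have ws' f : wsum s' f = wsum s f + t * \sum_p g p * f (x p).
  have -> : wsum s' f = \sum_p (al p + t * g p) * f (x p).
    rewrite /wsum big_map big_enum /= [RHS](bigD1 pm) //= alpm mul0r add0r.
    by apply: eq_bigl => p; rewrite inE.
  rewrite /wsum (big_tnth _ _ s) -/N mulr_sumr -big_split /=.
  by apply: eq_bigr => p _; rewrite mulrDl mulrA.
exists s'; split.
- split; first by apply: weighted_in_map => p /=; have [] := weighted_in_tnth ws p.
  by rewrite ws'; under eq_bigr do rewrite mulr1; rewrite g1 mulr0 addr0.
- by rewrite size_map -cardE cardC1 card_ord.
- by move=> j; rewrite ws' gu mulr0 addr0.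
- by rewrite ws' lerDl; apply: mulr_ge0.
Qed.

Lemma caratheodory k (u : 'I_k -> X -> R) (h : X -> R) D s : convex_comb D s ->
  exists s', [/\ convex_comb D s', (size s' <= k.+1)%N,
    forall j, wsum s' (u j) = wsum s (u j) & wsum s h <= wsum s' h].
Proof.
elim: {s}(size s) {-2}s (leqnn (size s)) => [|N IH] s sN cs.
  by exists s; split => //; exact: leq_trans sN _.
have [|ks] := leqP (size s) k.+1; first by exists s.
have [s1 [cs1 sz1 us1 hs1]] := caratheodory_step u h cs ks.
have [|s2 [cs2 sz2 us2 hs2]] := IH s1 _ cs1.
  by rewrite sz1 -ltnS prednK // (leq_ltn_trans _ ks).
exists s2; split => //; first by move=> j; rewrite us2 us1.
exact: le_trans hs2.
Qed.

Lemma convex_comb_ord n D s : convex_comb D s -> (size s <= n.+1)%N ->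
  exists (x : 'I_n.+1 -> X) (al : 'I_n.+1 -> R),
    (forall i, 0 <= al i) /\ forall f, \sum_i al i * f (x i) = wsum s f.
Proof.
case: s => [[_]|p0 s' [ws s1] sn].
  by rewrite /wsum big_nil => /eqP; rewrite eq_sym oner_eq0.
set s := p0 :: s' in ws s1 sn *; pose q0 : R * X := (0, p0.2).
exists (fun i => (nth q0 s i).2), (fun i => (nth q0 s i).1); split.
  move=> i; have [lt|ge] := ltnP i (size s); first by have [] := weighted_in_nth q0 ws lt.
  by rewrite nth_default.
move=> f; rewrite /wsum (big_nth q0) big_mkord.
rewrite (big_ord_widen _ (fun i => (nth q0 s i).1 * f (nth q0 s i).2) sn).
rewrite [RHS]big_mkcond /=; apply: eq_bigr => i _; case: ltnP => // ge.
by rewrite nth_default // mul0r.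
Qed.

End caratheodory.

Section dirac_mix.
Context d (T : measurableType d) (R : realType) (N : nat).
Variables (x : 'I_N -> T) (a : 'I_N -> R).
Local Open Scope ereal_scope.

(* The proofs of validity of the weights are arguments so that the
   probability instance below can be attached to [dirac_mix]. *)
Definition dirac_mix (_ : forall i, (0 <= a i)%R) (_ : (\sum_i a i = 1)%R)
  (B : set T) : \bar R := \sum_(i < N) (a i)%:E * \d_(x i) B.

Variables (a0 : forall i, (0 <= a i)%R) (a1 : (\sum_i a i = 1)%R).
Local Notation mix := (dirac_mix a0 a1).

Let mix_seq (k : nat) : {measure set T -> \bar R} :=
  if insub k is Some i then mscale (NngNum (a0 i)) \d_(x i) else mzero.

Let mixE : mix = msum mix_seq N.
Proof. by apply/funext => B; apply: eq_bigr => i _; rewrite /mix_seq valK. Qed.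

Let mix0 : mix set0 = 0.
Proof. by rewrite mixE measure0. Qed.

Let mix_ge0 B : 0 <= mix B.
Proof. by rewrite mixE measure_ge0. Qed.

Let mix_sigma_additive : semi_sigma_additive mix.
Proof. by rewrite mixE; exact: measure_semi_sigma_additive. Qed.

HB.instance Definition _ := isMeasure.Build _ _ _ mix mix0 mix_ge0 mix_sigma_additive.

Let mix_setT : mix setT = 1.
Proof.
by rewrite /dirac_mix; under eq_bigr do rewrite diracT mule1; rewrite sumEFin a1.
Qed.

HB.instance Definition _ := Measure_isProbability.Build _ _ _ mix mix_setT.

Lemma ge0_integral_dirac_mix (f : T -> \bar R) : measurable_fun setT f ->
  (forall y, 0 <= f y) -> \int[mix]_y f y = \sum_i (a i)%:E * f (x i).
Proof.
move=> mf f0; rewrite (eq_measure_integral (msum mix_seq N)); last first.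
  by move=> B mB _; exact: (congr1 (fun m => m B) mixE).
rewrite ge0_integral_measure_sum //; apply: eq_bigr => i _.
by rewrite /mix_seq valK ge0_integral_mscale //= integral_dirac // diracT mul1e.
Qed.

Lemma integral_dirac_mix (f : T -> R) : measurable_fun setT f ->
  \int[mix]_y (f y)%:E = (\sum_i a i * f (x i))%:E.
Proof.
move=> mf; have mEf : measurable_fun setT (EFin \o f) by exact/measurable_EFinP.
rewrite integralE (ge0_integral_dirac_mix (measurable_funepos mEf)) //.
rewrite (ge0_integral_dirac_mix (measurable_funeneg mEf)) //.
under eq_bigr do rewrite funeposE -EFin_max -EFinM.
under [X in _ - X]eq_bigr do rewrite funenegE -EFin_max -EFinM.
rewrite !sumEFin -EFinB -sumrB; congr EFin; apply: eq_bigr => i _.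
rewrite -mulrBr; congr (_ * _)%R.
have [f0|f0] := leP 0%R (f (x i)).
  by rewrite max_r ?subr0 // oppr_le0.
by rewrite max_l ?sub0r ?opprK // oppr_ge0 ltW.
Qed.

Lemma integrable_dirac_mix (f : T -> R) : measurable_fun setT f ->
  mix.-integrable setT (EFin \o f).
Proof.
move=> mf; apply/integrableP; split; first exact/measurable_EFinP.
rewrite ge0_integral_dirac_mix //; last first.
  by apply: measurableT_comp => //; exact/measurable_EFinP.
by under eq_bigr do rewrite /comp abse_EFin -EFinM; rewrite sumEFin ltry.
Qed.

End dirac_mix.

Section moment_matching.
Context d (X : measurableType d) (R : realType) (mu : probability X R).
Local Open Scope ereal_scope.

Lemma integral_centered (f : X -> R) : mu.-integrable setT (EFin \o f) ->
  let m := fine (\int[mu]_x (f x)%:E) in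
  [/\ (\int[mu]_x (f x)%:E) = m%:E,
      mu.-integrable setT (EFin \o (fun x => f x - m)%R) &
      \int[mu]_x (f x - m)%:E = 0].
Proof.
move=> intf m; have fm : \int[mu]_x (f x)%:E = m%:E.
  by rewrite /m fineK //; exact: integrable_fin_num intf.
have intm : mu.-integrable setT (EFin \o cst m) by exact: finite_measure_integrable_cst.
have -> : EFin \o (fun x => f x - m)%R = (EFin \o f) \- (EFin \o cst m).
  by apply/funext => x /=; rewrite EFinB.
split => //; first exact: integrableB.
rewrite (integralB_EFin _ intf intm) // fm.
rewrite (_ : \int[mu]_x (cst m x)%:E = m%:E) ?subee //.
by rewrite -[RHS]mule1 -(probability_setT mu) -integral_cst.
Qed.

(* Richter's theorem, with Caratheodory's bound on the number of atoms. *)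
Lemma moment_matching_comb k (f : 'I_k -> X -> R) (h : X -> R) (c : R) :
  (forall j, mu.-integrable setT (EFin \o f j)) -> measurable_fun setT h ->
  c%:E < \int[mu]_x (h x)%:E ->
  exists (x : 'I_k.+1 -> X) (al : 'I_k.+1 -> R),
    [/\ forall i, (0 <= al i)%R, (\sum_i al i = 1)%R,
        forall j, (\sum_i al i * f j (x i))%:E = \int[mu]_y (f j y)%:E &
        (c <= \sum_i al i * h (x i))%R].
Proof.
move=> intf mh ch.
pose m j := fine (\int[mu]_x (f j x)%:E).
have [fm iu u0] : [/\ forall j, \int[mu]_x (f j x)%:E = (m j)%:E,
    forall j, mu.-integrable setT (EFin \o (fun x => f j x - m j)%R) &
    forall j, \int[mu]_x (f j x - m j)%:E = 0].
  by split=> j; have [] := integral_centered (intf j).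
have [s [cs us hs]] := moment_comb_exists measurableT (probability_setT mu) iu u0 mh ch.
have [s' [cs' sz' us' hs']] := caratheodory (fun j x => f j x - m j)%R h cs.
have [x [al [al0 alE]]] := convex_comb_ord cs' sz'.
have al1 : (\sum_i al i = 1)%R.
  by under eq_bigr do rewrite -[al _]mulr1; rewrite (alE (fun=> 1%R)); case: cs'.
exists x, al; split => //; last by rewrite (alE h); exact: le_trans hs hs'.
move=> j; rewrite fm (alE (f j)); congr EFin.
have -> : f j = (fun x => (f j x - m j) + m j * 1)%R.
  by apply/funext => y; rewrite mulr1 subrK.
by rewrite wsumD wsumZ us' us; case: cs' => _ ->; rewrite add0r mulr1.
Qed.

End moment_matching.

Lemma lee_from_fin_lt (R : realType) (x y : \bar R) :
  (forall c : R, (c%:E < x)%E -> (c%:E <= y)%E) -> (x <= y)%E.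
Proof.
case: x => [r| |] H; last exact: leNye.
- case: y H => [s| |] H; [|exact: leey|].
    rewrite lee_fin leNgt; apply/negP => sr.
    by have := H ((r + s) / 2); rewrite lte_fin lee_fin => /(_ ltac:(lra)); lra.
  by have := H (r - 1); rewrite lte_fin ltrBlDr ltrDl ltr01 => /(_ isT).
- by rewrite (@eq_infty _ y) // => r; apply: H; exact: ltry.
Qed.

Section moment_constraints.
Context (R : realType) (A Q : ptopologicalType) (Psi : A -> Q) (n : nat).
Variables (g : 'I_n -> Q -> R) (lo up : 'I_n -> \bar R).
Hypothesis mPsi : measurable_fun [set: borel A] (Psi : borel A -> borel Q).
Hypothesis mg : forall j, measurable_fun [set: borel Q] (g j : borel Q -> R).
Local Open Scope ereal_scope.

Lemma PiI_moment (pi : probability (borel A) R) : PiI Psi g lo up pi -> forall j,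
  pi.-integrable setT (EFin \o (fun x => g j (Psi x))) /\
  lo j <= \int[pi]_x (g j (Psi x))%:E <= up j.
Proof.
move=> [P PE PQ] j; have [intg gI] := PQ j.
have mgPsi : measurable_fun [set: borel A] (fun x => g j (Psi x)).
  exact: measurableT_comp (mg j) mPsi.
have pushE (f : borel Q -> \bar R) :
    \int[pushforward pi (Psi : borel A -> borel Q)]_y f y = \int[P]_y f y.
  by apply: eq_measure_integral => B mB _; exact/esym/PE.
have int_gPsi : pi.-integrable setT (EFin \o (fun x => g j (Psi x))).
  apply/integrableP; split; first exact/measurable_EFinP.
  have := (integrableP _ _ _ intg).2; rewrite -pushE ge0_integral_pushforward //.
  by apply: measurableT_comp => //; exact/measurable_EFinP.
split => //; suff -> : \int[pi]_x (g j (Psi x))%:E = \int[P]_y (g j y)%:E by [].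
by rewrite -pushE (integral_pushforward mPsi) //; exact/measurable_EFinP.
Qed.

Lemma dirac_mix_PiI_Delta (mu : 'I_n.+1 -> A) (al : 'I_n.+1 -> R)
    (al0 : forall i, (0 <= al i)%R) (al1 : (\sum_i al i = 1)%R) :
  (forall j, in_cinterval (lo j) (up j) (\sum_i al i * g j (Psi (mu i)))) ->
  (PiI Psi g lo up `&` @Delta R A n) (dirac_mix (mu : 'I_n.+1 -> borel A) al0 al1).
Proof.
move=> mu_in; split; last by exists mu, al.
exists (dirac_mix (fun i => Psi (mu i) : borel Q) al0 al1).
  by move=> B mB; apply: eq_bigr => i _; rewrite !diracE.
move=> j; split; first exact: integrable_dirac_mix.
by rewrite integral_dirac_mix //; exact: mu_in.
Qed.

End moment_constraints.

Theorem theorem3p4 (R : realType) (A Q : ptopologicalType)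
  (Phi : A -> R) (Psi : A -> Q) (n : nat)
  (g : 'I_n -> Q -> R) (lo up : 'I_n -> \bar R) :
  @suslin_space R A ->
  measurable_fun [set: borel A] (Phi : borel A -> R) ->
  semibounded Phi ->
  separable_space Q -> @metrizable_space R Q ->
  measurable_fun [set: borel A] (Psi : borel A -> borel Q) ->
  (forall j, measurable_fun [set: borel Q] (g j : borel Q -> R)) ->
  (forall j, lo j != +oo%E /\ up j != -oo%E /\ (lo j <= up j)%E) ->
  Uval Phi (PiI Psi g lo up) = Uval Phi (PiI Psi g lo up `&` @Delta R A n) /\
  Uval Phi (PiI Psi g lo up `&` @Delta R A n) =
  ereal_sup [set r : \bar R | exists (mu : 'I_n.+1 -> A) (alpha : 'I_n.+1 -> R),
     [/\ forall i, 0 <= alpha i, \sum_(i < n.+1) alpha i = 1,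
         forall j : 'I_n,
           in_cinterval (lo j) (up j) (\sum_(i < n.+1) alpha i * g j (Psi (mu i))) &
         r = (\sum_(i < n.+1) alpha i * Phi (mu i))%:E]].
Proof.
move=> _ mPhi _ _ _ mPsi mg _; set S := ereal_sup _.
have Delta_le :
    (Uval Phi (PiI Psi g lo up `&` @Delta R A n) <= Uval Phi (PiI Psi g lo up))%E.
  by apply: ereal_sup_le => _ [pi [piI _] <-]; exists pi.
have S_le : (S <= Uval Phi (PiI Psi g lo up `&` @Delta R A n))%E.
  apply: ge_ereal_sup => _ [mu [al [al0 al1 mu_in ->]]].
  apply: ereal_sup_ubound; exists (dirac_mix (mu : 'I_n.+1 -> borel A) al0 al1).
    exact: dirac_mix_PiI_Delta.
  exact: integral_dirac_mix.
have le_S : (Uval Phi (PiI Psi g lo up) <= S)%E.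
  apply: ge_ereal_sup => _ [pi piI <-]; apply: lee_from_fin_lt => c.
  have [intg gI] := all_and2 (PiI_moment mPsi mg piI).
  move=> /(moment_matching_comb intg mPhi) [mu [al [al0 al1 alg alPhi]]].
  apply: (@le_trans _ _ (\sum_i al i * Phi (mu i))%:E); first by rewrite lee_fin.
  by apply: ereal_sup_ubound; exists mu, al; split => // j; rewrite /in_cinterval alg.
split; apply/eqP; rewrite eq_le.
  by rewrite Delta_le (le_trans le_S S_le).
by rewrite S_le (le_trans Delta_le le_S).
Qed.
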